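(* Let $n\ge 2k\ge 4$. Let $\mathbb{S}$ be a $q$-covering design $\mathcal{C}_2(n-k+1,k,2)$ (a set of $k$-dimensional subspaces of $\mathbb{F}_2^{n-k+1}$ covering every $2$-dimensional subspace), let $U\subseteq\mathbb{F}_2^{n-k+1}$ be an $(n-k)$-dimensional subspace, and let $c=|\{X\in\mathbb{S}: X\subseteq U\}|$. Then $$\mathcal{C}_2(n,k,2)\le 2^{2(n-k)}+(2^k-1)|\mathbb{S}|-(2^k-2)c.$$
   Context: A $q$-covering design $\mathcal{C}_q(n,k,r)$ is a collection of $k$-dimensional subspaces of $\mathbb{F}_q^n$ such that every $r$-dimensional subspace of $\mathbb{F}_q^n$ is contained in at least one member; $\mathcal{C}_q(n,k,r)$ denotes the minimum size of such a collection. *)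

From HB Require Import structures.
From mathcomp Require Import all_boot all_order all_algebra all_fingroup all_field.
Set Implicit Arguments. Unset Strict Implicit. Unset Printing Implicit Defensive.
Import GRing.Theory.
Local Open Scope ring_scope.

Import VectorInternalTheory.
HB.instance Definition _ (K : finFieldType) (vT : vectType K) :=
  [Finite of {vspace vT} by <:].

Notation ambient K n := ('rV[K]_n) (only parsing).

Definition is_covering_design (K : finFieldType) (n k r : nat)
    (S : {set {vspace 'rV[K]_n}}) : Prop :=
  (forall X, X \in S -> \dim X = k) /\
  (forall Y : {vspace 'rV[K]_n}, \dim Y = r ->
     exists2 X, X \in S & (Y <= X)%VS).
Arguments is_covering_design K n k r S : clear implicits.

Definition is_covering_designb (K : finFieldType) (n k r : nat)
    (S : {set {vspace 'rV[K]_n}}) : bool :=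
  [forall X in S, \dim X == k] &&
  [forall Y : {vspace 'rV[K]_n}, (\dim Y == r) ==> [exists X in S, (Y <= X)%VS]].
Arguments is_covering_designb K n k r S : clear implicits.

(* C_q(n,k,r): the minimum size of a q-covering design (the default value,
   larger than any set of subspaces, only matters if no covering design
   exists, which does not happen when r <= k <= n). *)
Definition covering_number (K : finFieldType) (n k r : nat) : nat :=
  \big[minn/#|{set {vspace 'rV[K]_n}}|]_(S : {set {vspace 'rV[K]_n}}
      | is_covering_designb K n k r S) #|S|.

From HB Require Import structures.
From mathcomp Require Import all_boot all_order all_algebra all_fingroup all_field.
From mathcomp Require Import ring zify.
Set Implicit Arguments. Unset Strict Implicit. Unset Printing Implicit Defensive.
Import Order.TTheory GRing.Theory.
Local Open Scope ring_scope.

(* Write m = n - k and F_2^n = F_2^m x F_2^k.  From a covering design S of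
   F_2^(m+1) and a hyperplane U of F_2^(m+1) we build a covering design of
   F_2^n out of three families of k-spaces:
   - the graphs {(x G, x)} of 2^(2m) maps G : F_2^k -> F_2^m forming an
     interpolating family (any two distinct nonzero points can be sent
     anywhere); they are the restrictions of x |-> a x + b x^2 on GF(2^m);
   - for each nonzero b in F_2^k and each X in S not inside U, the image of
     X under an embedding phi_b : F_2^(m+1) -> F_2^n whose image contains
     every vector with last coordinates on the line through b;
   - for each X in S inside U, a single image phi_b X, since all phi_b agree
     on U.
   A plane whose last coordinates span a 2-space is covered by a graph;
   otherwise its last coordinates lie on a line F_2 b and the plane is the
   image under phi_b of a plane of F_2^(m+1), covered by some X in S.
   Counting the three families gives the bound. *)

Lemma covering_number_le (K : finFieldType) (n k r : nat)
    (T : {set {vspace 'rV[K]_n}}) :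
  is_covering_design K n k r T -> (covering_number K n k r <= #|T|)%N.
Proof.
case=> Tdim Tcov; rewrite /covering_number -minEnat -leEnat.
apply: bigmin_le_cond; apply/andP; split; first by apply/forall_inP => X /Tdim ->.
apply/forallP => Y; apply/implyP => /eqP /Tcov [X XT YX].
by apply/exists_inP; exists X.
Qed.

Section SubspaceImages.
Variable K : fieldType.

Definition mx_image (p q : nat) (M : 'M[K]_(p, q)) (X : {vspace 'rV[K]_p}) :
    {vspace 'rV[K]_q} :=
  (linfun (@mulmxr _ 1%N _ _ M) @: X)%VS.

Lemma mx_image_mem (p q : nat) (M : 'M[K]_(p, q)) (X : {vspace 'rV[K]_p}) z :
  z \in X -> z *m M \in mx_image M X.
Proof. by move=> zX; apply/memv_imgP; exists z; rewrite ?lfunE. Qed.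

Lemma dim_mx_image (p q : nat) (M : 'M[K]_(p, q)) (X : {vspace 'rV[K]_p}) :
  (forall z : 'rV_p, z *m M = 0 -> z = 0) -> \dim (mx_image M X) = \dim X.
Proof.
move=> M_inj; apply: limg_dim_eq; apply/eqP; rewrite -subv0.
apply/subvP => z; rewrite memv_cap memv_ker lfunE /= => /andP[_ /eqP/M_inj ->].
exact: mem0v.
Qed.

Lemma dim_mx_image_le (p q : nat) (M : 'M[K]_(p, q)) (X : {vspace 'rV[K]_p}) :
  (\dim (mx_image M X) <= \dim X)%N.
Proof. by rewrite -(limg_ker_dim (linfun (@mulmxr _ 1%N _ _ M)) X) leq_addl. Qed.

Lemma dim_rowv_full (p : nat) : \dim (fullv : {vspace 'rV[K]_p}) = p.
Proof. by rewrite dimvf /dim /= mul1n. Qed.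

Lemma dim2_span (p : nat) (Y : {vspace 'rV[K]_p}) :
  \dim Y = 2 -> exists y1 y2, Y = <<[:: y1; y2]>>%VS.
Proof.
move=> dimY; rewrite -(span_basis (vbasisP Y)).
case: (vbasis Y) => s; rewrite dimY; case: s => [|y1 [|y2 [|]]] //= _.
by exists y1, y2.
Qed.

Lemma span2_subv (p : nat) (X : {vspace 'rV[K]_p}) y1 y2 :
  y1 \in X -> y2 \in X -> (<<[:: y1; y2]>> <= X)%VS.
Proof.
by move=> y1X y2X; apply/span_subvP => y; rewrite !inE => /orP[]/eqP->.
Qed.

Definition mx_of_fun (p q : nat) (f : 'rV[K]_p -> 'rV[K]_q) : 'M[K]_(p, q) :=
  \matrix_i f 'e_i.

Lemma mx_of_funE (p q : nat) (f : 'rV[K]_p -> 'rV[K]_q) :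
  {morph f : x y / x + y} -> (forall a x, f (a *: x) = a *: f x) ->
  forall z, z *m mx_of_fun f = f z.
Proof.
move=> fD fZ z; rewrite mulmx_sum_row {2}(row_sum_delta z).
have f0 : f 0 = 0 by rewrite -(scale0r 0) fZ scale0r.
rewrite (big_morph f fD f0); apply: eq_bigr => i _.
by rewrite rowK fZ.
Qed.

End SubspaceImages.

Lemma F2_cases (a : 'F_2) : a = 0 \/ a = 1.
Proof. by case: a => [[|[|//]]] ?; [left | right]; apply: val_inj. Qed.

Lemma F2_additive_scalable (V W : lmodType 'F_2) (f : V -> W) :
  {morph f : x y / x + y} -> forall a x, f (a *: x) = a *: f x.
Proof.
move=> fD a x; have f0 : f 0 = 0 by apply: (addrI (f 0)); rewrite -fD !addr0.
by case: (F2_cases a) => ->; rewrite ?scale0r ?scale1r ?f0.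
Qed.

Section HyperplaneCoordinates.
Variable K : fieldType.

(* Coordinates adapted to a hyperplane U of K^(m+1): a functional L with
   kernel U and a map Th to K^m which together identify K^(m+1) with
   K x K^m.  They come from a basis of K^(m+1) extending one of U. *)
Lemma hyperplane_coordinates (m : nat) (U : {vspace 'rV[K]_(m + 1)}) :
  \dim U = m ->
  exists (L : 'cV[K]_(m + 1)) (Th : 'M[K]_(m + 1, m)),
    [/\ forall z : 'rV_(m + 1), z *m L = 0 -> z *m Th = 0 -> z = 0,
        forall (t : 'M[K]_1) (a : 'rV[K]_m),
          exists z : 'rV_(m + 1), z *m L = t /\ z *m Th = a
      & forall z : 'rV_(m + 1), z \in U -> z *m L = 0].
Proof.
move=> dimU; move: (vbasis U) (vbasisP U); rewrite dimU => B basisB.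
have [e _ eU] : exists2 e, e \in fullv & e \notin U.
  by apply/subvPn; apply/negP => /dimvS; rewrite dim_rowv_full dimU addn1 ltnn.
pose X : m.+1.-tuple 'rV[K]_(m + 1) := [tuple of e :: B].
have freeX : free X.
  by rewrite free_cons (span_basis basisB) eU (basis_free basisB).
have spanX : <<X>>%VS = fullv.
  apply/eqP; rewrite eqEdim subvf (eqnP freeX) dim_rowv_full size_tuple.
  by rewrite addn1 leqnn.
pose L := mx_of_fun (fun z => (coord X ord0 z)%:M : 'M[K]_1).
pose Th := mx_of_fun (fun z => \row_i coord X (lift ord0 i) z).
have LE z : z *m L = (coord X ord0 z)%:M.
  rewrite mx_of_funE // => [x y|a x]; first by rewrite raddfD raddfD.
  by rewrite linearZ scale_scalar_mx.
have ThE z : z *m Th = \row_i coord X (lift ord0 i) z.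
  rewrite mx_of_funE // => [x y|a x]; apply/rowP => i; rewrite !mxE.
    by rewrite raddfD.
  by rewrite linearZ.
exists L, Th; split.
- move=> z zL0 zTh0.
  rewrite (coord_span (_ : z \in <<X>>%VS)) ?spanX ?memvf //.
  apply: big1 => i _; suff -> : coord X i z = 0 by rewrite scale0r.
  case: (unliftP ord0 i) => [j ->|->].
    by move/rowP/(_ j): zTh0; rewrite ThE !mxE.
  by move/matrixP/(_ 0 0): zL0; rewrite LE !mxE mulr1n.
- move=> t a.
  pose w i := if unlift ord0 i is Some j then a 0 j else t 0 0.
  exists (\sum_i w i *: X`_i); rewrite LE ThE coord_sum_free // /w unlift_none.
  split; first by rewrite -mx11_scalar.
  by apply/rowP => j; rewrite mxE coord_sum_free // liftK.
- move=> z zU; rewrite LE (coord_span (_ : z \in <<B>>%VS)) ?(span_basis basisB) //.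
  rewrite linear_sum big1 ?raddf0 // => i _; rewrite linearZ /=.
  have -> : B`_i = X`_(lift ord0 i) by [].
  by rewrite coord_free // eq_sym (negPf (neq_lift _ _)) mulr0.
Qed.
(* Embeddings of K^(m+1) into K^(m+k) = K^m x K^k, one for each nonzero
   b in K^k, sending z to (Th z, L z * b). *)
Lemma hyperplane_lifts (m k : nat) (U : {vspace 'rV[K]_(m + 1)}) :
  \dim U = m ->
  exists phi : 'rV[K]_k -> 'M[K]_(m + 1, m + k),
    [/\ forall b (z : 'rV_(m + 1)), b != 0 -> z *m phi b = 0 -> z = 0,
        forall b (a : 'rV_m) (t : K), b != 0 ->
          exists z : 'rV_(m + 1), z *m phi b = row_mx a (t *: b)
      & forall b b' (z : 'rV_(m + 1)), z \in U -> z *m phi b = z *m phi b'].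
Proof.
move=> /hyperplane_coordinates[L [Th [coord_inj coord_surj LU]]].
have phiE (b : 'rV_k) (z : 'rV_(m + 1)) :
    z *m row_mx Th (L *m b) = row_mx (z *m Th) ((z *m L) 0 0 *: b).
  by rewrite -mul_scalar_mx -mx11_scalar mul_mx_row mulmxA.
exists (fun b => row_mx Th (L *m b)); split.
- move=> b z b0; rewrite phiE => /eqP; rewrite row_mx_eq0 scaler_eq0 (negPf b0).
  rewrite orbF => /andP[/eqP zTh0 zL0]; apply: coord_inj zTh0.
  by rewrite [z *m L]mx11_scalar (eqP zL0) raddf0.
- move=> b a t _; have [z [zL zTh]] := coord_surj t%:M a.
  by exists z; rewrite phiE zTh zL mxE eqxx mulr1n.
- by move=> b b' z /LU zL0; rewrite !phiE zL0 !mxE !scale0r.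
Qed.
End HyperplaneCoordinates.

Import VectorInternalTheory.

Lemma binary_field_coordinates (d : nat) : (0 < d)%N ->
  exists (L : finFieldType) (emb : 'rV['F_2]_d -> L) (coords : L -> 'rV['F_2]_d),
    [/\ #|L| = (2 ^ d)%N, 2%:R = 0 :> L,
        {morph emb : x y / x + y}, {morph coords : x y / x + y}
      & cancel emb coords].
Proof.
move=> d_gt0; have [F charF cardF] := pPrimePowerField (isT : prime 2) d_gt0.
pose L := pPrimeCharType charF.
have dimL : dim L = d by rewrite -dimvf pprimeChar_dimf cardF pfactorK.
exists L, (fun u => r2v (castmx (erefl 1%N, esym dimL) u) : L).
exists (fun x : L => castmx (erefl 1%N, dimL) (v2r x)).
split => //; first exact: pcharf0.
- move=> x y; rewrite /= -raddfD; congr r2v.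
  by apply/matrixP => i j; rewrite !(castmxE, mxE).
- move=> x y; rewrite /= raddfD.
  by apply/matrixP => i j; rewrite !(castmxE, mxE).
- by move=> u; rewrite r2vK castmxKV.
Qed.

Lemma quadratic_interpolation (F : fieldType) (x1 x2 u1 u2 : F) :
  x1 != 0 -> x2 != 0 -> x1 != x2 ->
  exists a b, a * x1 + b * x1 ^+ 2 = u1 /\ a * x2 + b * x2 ^+ 2 = u2.
Proof.
move=> x1_neq0 x2_neq0 x12.
exists ((u1 * x2 ^+ 2 - u2 * x1 ^+ 2) / (x1 * x2 * (x2 - x1))).
exists ((x1 * u2 - x2 * u1) / (x1 * x2 * (x2 - x1))).
by split; field; rewrite x1_neq0 x2_neq0 subr_eq0 eq_sym x12.
Qed.

Lemma char2_quadratic_additive (R : comNzRingType) (a b : R) :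
  2%:R = 0 :> R -> {morph (fun x => a * x + b * x ^+ 2) : x y / x + y}.
Proof.
move=> char2 x y /=; rewrite sqrrD -mulr_natr char2 mulr0 addr0; ring.
Qed.

Definition interpolating (K : fieldType) (k d : nat) (Fam : seq 'M[K]_(k, d)) :=
  forall x1 x2 : 'rV[K]_k, x1 != 0 -> x2 != 0 -> x1 != x2 ->
  forall u1 u2 : 'rV[K]_d, exists2 G, G \in Fam & x1 *m G = u1 /\ x2 *m G = u2.

(* An interpolating family of 2^(2d) binary k x d matrices: restrict the
   maps x |-> a x + b x^2 of GF(2^d) to a copy of F_2^k. *)
Lemma binary_interpolating_family (k d : nat) : (0 < d)%N -> (k <= d)%N ->
  exists Fam : seq 'M['F_2]_(k, d), size Fam = (2 ^ (2 * d))%N /\ interpolating Fam.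
Proof.
move=> d_gt0 kd.
have [L [emb [coords [cardL char2 embD coordsD embK]]]] :=
  binary_field_coordinates d_gt0.
pose io (x : 'rV_k) := emb (x *m pid_mx k).
have ioD : {morph io : x y / x + y} by move=> x y; rewrite /io mulmxDl embD.
have io_inj : injective io.
  apply: inj_comp (can_inj embK) (row_free_inj _).
  by rewrite /row_free rank_pid_mx.
have io0 : io 0 = 0 by rewrite /io mul0mx -(addrK (emb 0) (emb 0)) -embD addr0 subrr.
pose g a b x := coords (a * io x + b * io x ^+ 2).
have gD a b : {morph g a b : x y / x + y}.
  move=> x y; rewrite /g -coordsD ioD; congr coords.
  exact: char2_quadratic_additive.
exists [seq mx_of_fun (g p.1 p.2) | p <- enum {: L * L}]; split.
  by rewrite size_map -cardE card_prod cardL mulnn -expnM mulnC.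
move=> x1 x2 x1_neq0 x2_neq0 x12 u1 u2.
have [||| a [b [g1 g2]]] := quadratic_interpolation (emb u1) (emb u2)
  (x1 := io x1) (x2 := io x2); rewrite -?io0 ?(inj_eq io_inj) //.
exists (mx_of_fun (g a b)); first by apply/mapP; exists (a, b); rewrite ?mem_enum.
have gE x : x *m mx_of_fun (g a b) = g a b x.
  by apply: mx_of_funE; [exact: gD | exact: F2_additive_scalable].
by rewrite !gE /g g1 g2 !embK.
Qed.

Lemma F2_dependent_pair (V : lmodType 'F_2) (v1 v2 b0 : V) : b0 != 0 ->
  ~~ [&& v1 != 0, v2 != 0 & v1 != v2] ->
  exists2 b, b != 0 & exists t1 t2 : 'F_2, v1 = t1 *: b /\ v2 = t2 *: b.
Proof.
move=> b0_neq0.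
case: (eqVneq v1 0) => [->|v1_neq0]; case: (eqVneq v2 0) => [->|v2_neq0] /=.
- by move=> _; exists b0 => //; exists 0, 0; rewrite scale0r.
- by move=> _; exists v2 => //; exists 0, 1; rewrite scale0r scale1r.
- by move=> _; exists v1 => //; exists 1, 0; rewrite scale0r scale1r.
- by rewrite negbK => /eqP <-; exists v1 => //; exists 1, 1; rewrite scale1r.
Qed.

Section Construction.
Variables (m k : nat) (S : {set {vspace 'rV['F_2]_(m + 1)}}).
Variable U : {vspace 'rV['F_2]_(m + 1)}.
Hypothesis S_design : is_covering_design 'F_2 (m + 1) k 2 S.

Variable Fam : seq 'M['F_2]_(k, m).
Hypothesis Fam_size : size Fam = (2 ^ (2 * m))%N.
Hypothesis Fam_interpolating : interpolating Fam.

Variable phi : 'rV['F_2]_k -> 'M['F_2]_(m + 1, m + k).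
Hypothesis phi_inj :
  forall b (z : 'rV_(m + 1)), b != 0 -> z *m phi b = 0 -> z = 0.
Hypothesis phi_onto : forall b (a : 'rV_m) (t : 'F_2), b != 0 ->
  exists z : 'rV_(m + 1), z *m phi b = row_mx a (t *: b).
Hypothesis phi_U :
  forall b b' (z : 'rV_(m + 1)), z \in U -> z *m phi b = z *m phi b'.

Variable b0 : 'rV['F_2]_k.
Hypothesis b0_neq0 : b0 != 0.

Definition S_in := [set X in S | (X <= U)%VS].
Definition S_out := [set X in S | ~~ (X <= U)%VS].

Definition graph_spaces : {set {vspace 'rV['F_2]_(m + k)}} :=
  [set mx_image (row_mx G 1%:M) fullv | G in Fam].

Definition lifted_spaces : {set {vspace 'rV['F_2]_(m + k)}} :=
  [set mx_image (phi p.1) p.2 | p in setX [set b | b != 0] S_out].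

Definition hyperplane_spaces : {set {vspace 'rV['F_2]_(m + k)}} :=
  [set mx_image (phi b0) X | X in S_in].

Definition new_design := graph_spaces :|: lifted_spaces :|: hyperplane_spaces.

Lemma new_design_dim X : X \in new_design -> \dim X = k.
Proof.
have [S_dim _] := S_design.
rewrite !in_setU => /orP[/orP[]|].
- case/imsetP => G _ ->; rewrite dim_mx_image ?dim_rowv_full // => z.
  by rewrite mul_mx_row mulmx1 => /eqP; rewrite row_mx_eq0 => /andP[_ /eqP].
- case/imsetP => -[b X']; rewrite !inE /= => /and3P[b_neq0 X'S _] ->.
  by rewrite dim_mx_image ?S_dim // => z; apply: phi_inj.
- case/imsetP => X'; rewrite !inE => /andP[X'S _] ->.
  by rewrite dim_mx_image ?S_dim // => z; apply: phi_inj.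
Qed.

Lemma graph_spaces_cover (y1 y2 : 'rV['F_2]_(m + k)) :
  rsubmx y1 != 0 -> rsubmx y2 != 0 -> rsubmx y1 != rsubmx y2 ->
  exists2 X, X \in graph_spaces & (y1 \in X) && (y2 \in X).
Proof.
move=> y1_neq0 y2_neq0 y12.
have [G GFam [G1 G2]] :=
  Fam_interpolating y1_neq0 y2_neq0 y12 (lsubmx y1) (lsubmx y2).
have graphE (y : 'rV_(m + k)) :
    rsubmx y *m G = lsubmx y -> y = rsubmx y *m row_mx G 1%:M.
  by move=> yG; rewrite mul_mx_row mulmx1 yG hsubmxK.
exists (mx_image (row_mx G 1%:M) fullv); first exact: imset_f.
by rewrite {1}(graphE y1) // {1}(graphE y2) // !mx_image_mem ?memvf.
Qed.

(* Two independent vectors whose last k coordinates lie on the line through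
   a nonzero b are the images under phi b of two vectors of F_2^(m+1), whose
   span is covered by a member of S. *)
Lemma lifted_spaces_cover (y1 y2 : 'rV['F_2]_(m + k)) (b : 'rV['F_2]_k)
    (t1 t2 : 'F_2) :
  \dim <<[:: y1; y2]>> = 2 -> b != 0 ->
  rsubmx y1 = t1 *: b -> rsubmx y2 = t2 *: b ->
  exists2 X, X \in new_design & (y1 \in X) && (y2 \in X).
Proof.
move=> dimY b_neq0 y1b y2b; have [_ S_cover] := S_design.
have [z1 z1E] := phi_onto (lsubmx y1) t1 b_neq0.
have [z2 z2E] := phi_onto (lsubmx y2) t2 b_neq0.
rewrite -y1b hsubmxK in z1E; rewrite -y2b hsubmxK in z2E.
have dimZ : \dim <<[:: z1; z2]>> = 2.
  apply/eqP; rewrite eqn_leq (dim_span [:: z1; z2]) -{1}dimY.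
  apply: leq_trans (dim_mx_image_le (phi b) _); apply/dimvS/span2_subv.
    by rewrite -z1E mx_image_mem ?memv_span ?mem_head.
  by rewrite -z2E mx_image_mem ?memv_span // !inE eqxx orbT.
have [X XS /subvP ZX] := S_cover _ dimZ.
have z1X : z1 \in X by rewrite ZX ?memv_span ?mem_head.
have z2X : z2 \in X by rewrite ZX ?memv_span // !inE eqxx orbT.
have [XU | XnU] := boolP (X <= U)%VS.
  exists (mx_image (phi b0) X).
    by rewrite in_setU imset_f ?orbT // inE XS.
  have [z1U z2U] := (subvP XU _ z1X, subvP XU _ z2X).
  by rewrite -z1E -z2E (phi_U b b0 z1U) (phi_U b b0 z2U) !mx_image_mem.
have bX : (b, X) \in setX [set b | b != 0] S_out by rewrite !inE b_neq0 XS.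
exists (mx_image (phi b) X).
  by rewrite !in_setU (imset_f (fun p => mx_image (phi p.1) p.2) bX) orbT.
by rewrite -z1E -z2E !mx_image_mem.
Qed.

(* Every plane of F_2^(m+k) is covered: by a graph space if the last k
   coordinates of a basis are independent, by a lift otherwise. *)
Lemma new_design_covering : is_covering_design 'F_2 (m + k) k 2 new_design.
Proof.
split; first exact: new_design_dim.
move=> Y dimY; have [y1 [y2 YE]] := dim2_span dimY.
suff [X XT /andP[y1X y2X]] :
    exists2 X, X \in new_design & (y1 \in X) && (y2 \in X).
  by exists X; rewrite // YE span2_subv.
have [/and3P[y1_neq0 y2_neq0 y12] | dependent] :=
  boolP [&& rsubmx y1 != 0, rsubmx y2 != 0 & rsubmx y1 != rsubmx y2].
  have [X XG y12X] := graph_spaces_cover y1_neq0 y2_neq0 y12.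
  by exists X; rewrite // !in_setU XG.
have [b b_neq0 [t1 [t2 [y1b y2b]]]] := F2_dependent_pair b0_neq0 dependent.
by apply: lifted_spaces_cover b_neq0 y1b y2b; rewrite -YE.
Qed.

Lemma new_design_card :
  (#|new_design| <= 2 ^ (2 * m) + (2 ^ k - 1) * #|S_out| + #|S_in|)%N.
Proof.
apply: leq_trans (leq_card_setU _ _) _; apply: leq_add; last exact: leq_imset_card.
apply: leq_trans (leq_card_setU _ _) _; apply: leq_add.
  by rewrite -Fam_size; apply: leq_trans (leq_imset_card _ _) (card_size _).
apply: leq_trans (leq_imset_card _ _) _; rewrite cardsX.
have -> : [set b : 'rV['F_2]_k | b != 0] = [set~ 0] by apply/setP => b; rewrite !inE.
by rewrite cardsC1 card_mx card_Fp // mul1n subn1.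
Qed.

End Construction.

(* The recursive bound, in the variables m = n - k and k: instantiate the
   construction with the families built above and count. *)
Lemma covering_number_extension (m k : nat) : (2 <= k)%N -> (k <= m)%N ->
  forall (S : {set {vspace 'rV['F_2]_(m + 1)}}) (U : {vspace 'rV['F_2]_(m + 1)}),
  is_covering_design 'F_2 (m + 1) k 2 S -> \dim U = m ->
  (covering_number 'F_2 (m + k) k 2 + (2 ^ k - 2) * #|[set X in S | (X <= U)%VS]|
    <= 2 ^ (2 * m) + (2 ^ k - 1) * #|S|)%N.
Proof.
move=> k_ge2 km S U S_design dimU.
have k_gt0 : (0 < k)%N by apply: leq_trans k_ge2.
have [Fam [Fam_size Fam_interp]] :=
  binary_interpolating_family (leq_trans k_gt0 km) km.
have [phi [phi_inj phi_onto phi_U]] := hyperplane_lifts k dimU.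
pose b0 : 'rV['F_2]_k := const_mx 1.
have b0_neq0 : b0 != 0.
  by apply/eqP => /rowP/(_ (Ordinal k_gt0)); rewrite !mxE => /eqP; rewrite oner_eq0.
have covering :=
  new_design_covering S_design Fam_interp phi_inj phi_onto phi_U b0_neq0.
have card_design := new_design_card S U Fam_size phi b0.
have card_S : #|S| = (#|S_in S U| + #|S_out S U|)%N.
  rewrite -(cardsID [set X | (X <= U)%VS] S).
  by congr (_ + _)%N; apply: eq_card => X; rewrite !inE andbC.
have two_le_r : (2 <= 2 ^ k)%N by rewrite -{1}(expn1 2) leq_exp2l.
have := leq_trans (covering_number_le covering) card_design.
rewrite -[[set X in S | _]]/(S_in S U) card_S.
case: (2 ^ k)%N two_le_r => [|[|r]] // _; rewrite subn1 subn2 /=; nia.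
Qed.

Local Close Scope ring_scope.

Theorem mainTheorem10 (n k : nat) (hk : 2 <= k) (hn : 2 * k <= n)
    (S : {set {vspace 'rV['F_2]_(n - k + 1)}})
    (hS : is_covering_design 'F_2 (n - k + 1) k 2 S)
    (U : {vspace 'rV['F_2]_(n - k + 1)}) (hU : \dim U = n - k)
    (c : nat) (hc : c = #|[set X in S | (X <= U)%VS]|) :
  covering_number 'F_2 n k 2 + (2 ^ k - 2) * c
    <= 2 ^ (2 * (n - k)) + (2 ^ k - 1) * #|S|.
Proof.
have k_le_nk : k <= n - k by lia.
have := covering_number_extension hk k_le_nk hS hU.
by rewrite subnK ?hc //; lia.
Qed.
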